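(* Let $p,q$ be integers with $1+|p|<|q|$. Then $\mathrm{Dom}_{p,q}$ is a regular language, and $\psi_{p,q}:\mathrm{Dom}_{p,q}\to\mathbb{Z}^2$ is an FA-presentation of $(\mathbb{Z}^2,+)$, i.e. the relation $\{(u,v,w)\in\mathrm{Dom}_{p,q}^3:\psi_{p,q}(u)+\psi_{p,q}(v)=\psi_{p,q}(w)\}$ is FA-recognizable. Moreover, if $\gcd(p,q)=1$, then neither of the languages $\psi_{p,q}^{-1}(\langle\xi\rangle)$, $\psi_{p,q}^{-1}(\langle\eta\rangle)$ is regular, and neither of the relations $\{(u,v):\psi_{p,q}(v)=\pi_\xi(\psi_{p,q}(u))\}$, $\{(u,v):\psi_{p,q}(v)=\pi_\eta(\psi_{p,q}(u))\}$ is FA-recognizable, where $\pi_\xi,\pi_\eta:\mathbb{Z}^2\to\mathbb{Z}^2$ are the projections $[sx+r]_\sim\mapsto[r]_\sim$ and $[sx+r]_\sim\mapsto[sx]_\sim$ onto the components of $\mathbb{Z}^2=\langle\eta\rangle\oplus\langle\xi\rangle$.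
   Context: Let $p,q$ be integers with $1+|p|<|q|$ and $t(x)=x^2+px-q$. For $f,g\in\mathbb{Z}[x]$ write $f\sim g$ if $t$ divides $f-g$; identify $\mathbb{Z}^2$ with the additive group of $\mathbb{Z}[x]/\langle t\rangle$ via $(h_1,h_2)\mapsto[h_1x+h_2]_\sim$, and put $\eta=[x]_\sim$, $\xi=[1]_\sim$. A polynomial $\sum a_ix^i$ is reduced if $|a_i|<|q|$ for all $i$. Let $\Sigma_q=\{-(|q|-1),\dots,|q|-1\}$ with the order $-(|q|-1)<\dots<|q|-1$; a string $a_0a_1\dots a_n\in\Sigma_q^*$ represents the reduced polynomial $a_nx^n+\dots+a_1x+a_0$, and two strings are equivalent if their polynomials are $\sim$-equivalent. $\mathrm{Dom}_{p,q}$ is the set of $w\in\Sigma_q^*$ such that no string $u$ strictly smaller than $w$ in the length-lexicographic order on $\Sigma_q^*$ is equivalent to $w$, and $\psi_{p,q}:\mathrm{Dom}_{p,q}\to\mathbb{Z}^2$ sends $w$ to the $\sim$-class of the polynomial it represents. For strings $w_1,\dots,w_m$ over an alphabet $\Sigma$, their convolution $w_1\otimes\dots\otimes w_m$ is the string over $(\Sigma\cup\{\diamond\})^m$ of length $\max|w_i|$ whose $k$-th letter is the column $(\sigma_1,\dots,\sigma_m)$, $\sigma_i$ being the $k$-th letter of $w_i$ if $k\le|w_i|$ and the padding symbol $\diamond$ otherwise. A relation $R\subseteq(\Sigma^* )^m$ is FA-recognizable if $\{w_1\otimes\dots\otimes w_m:(w_1,\dots,w_m)\in R\}$ is accepted by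 a finite automaton; a function is FA-recognizable if its graph is. *)

From HB Require Import structures.
From mathcomp Require Import all_boot all_order all_algebra.
Set Implicit Arguments. Unset Strict Implicit. Unset Printing Implicit Defensive.
Import Order.TTheory GRing.Theory Num.Theory.
Local Open Scope ring_scope.

Record dfa (A : finType) := DFA {
  dstate : finType;
  dstart : dstate;
  dstep : dstate -> A -> dstate;
  dfinal : pred dstate }.

Definition accepts (A : finType) (D : dfa A) (w : seq A) : bool :=
  @dfinal A D (foldl (@dstep A D) (@dstart A D) w).

Definition regular (A : finType) (L : seq A -> Prop) : Prop :=
  exists D : dfa A, forall w, accepts D w <-> L w.

(* Convolution of m strings: letters are columns in (A + diamond)^m,
   with diamond represented by None. *)
Definition conv (A : finType) (m : nat) (ws : 'I_m -> seq A)
  : seq {ffun 'I_m -> option A} :=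
  mkseq (fun k => [ffun i => onth (ws i) k]) (\max_(i < m) size (ws i))%N.

Definition FA_recognizable (A : finType) (m : nat) (R : ('I_m -> seq A) -> Prop)
  : Prop :=
  exists D : dfa {ffun 'I_m -> option A},
    forall x, accepts D x <-> exists ws, R ws /\ x = conv ws.

Definition i2_0 : 'I_2 := @Ordinal 2 0 isT.
Definition i2_1 : 'I_2 := @Ordinal 2 1 isT.
Definition i3_0 : 'I_3 := @Ordinal 3 0 isT.
Definition i3_1 : 'I_3 := @Ordinal 3 1 isT.
Definition i3_2 : 'I_3 := @Ordinal 3 2 isT.

(* Sigma_q = {-(|q|-1), ..., |q|-1}; the letter i : 'I_(2|q|-1) stands for
   the integer i - (|q|-1), so the order on letters is the order on ordinals. *)
Definition Sigma (q : int) : finType := 'I_(2 * absz q - 1).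

Definition letv (q : int) (a : Sigma q) : int :=
  (nat_of_ord a)%:Z - ((absz q)%:Z - 1).

(* the reduced polynomial a_n x^n + ... + a_0 represented by a_0 a_1 ... a_n *)
Definition poly_of (q : int) (w : seq (Sigma q)) : {poly int} :=
  Poly (map (@letv q) w).

Definition tpoly (p q : int) : {poly int} := 'X^2 + p%:P * 'X - q%:P.

Definition sim (p q : int) (f g : {poly int}) : Prop :=
  exists h : {poly int}, f - g = h * tpoly p q.

Fixpoint lex_lt (n : nat) (u w : seq 'I_n) : bool :=
  match u, w with
  | a :: u', b :: w' => (nat_of_ord a < nat_of_ord b)%N ||
                        ((a == b) && lex_lt u' w')
  | [::], _ :: _ => true
  | _, _ => false
  end.

Definition llex_lt (n : nat) (u w : seq 'I_n) : bool :=
  (size u < size w)%N || ((size u == size w) && lex_lt u w).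

Definition Dom (p q : int) (w : seq (Sigma q)) : Prop :=
  forall u : seq (Sigma q), llex_lt u w -> ~ sim p q (poly_of u) (poly_of w).

(* Z^2 identified with Z[x]/<t> via (h1,h2) |-> [h1 x + h2]: psi w is the pair
   (h1,h2) with poly_of w ~ h1 x + h2, computed as the remainder of division
   by the monic polynomial t. *)
Definition psi (p q : int) (w : seq (Sigma q)) : int * int :=
  let r := Pdiv.Ring.rmodp (poly_of w) (tpoly p q) in (r`_1, r`_0).

Arguments psi p q w : clear implicits.
Arguments Dom p q w : clear implicits.

Definition addZ2 (a b : int * int) : int * int := (a.1 + b.1, a.2 + b.2).

(* eta = [x] = (1,0), xi = [1] = (0,1) *)
Definition in_xi (a : int * int) : Prop := a.1 = 0.
Definition in_eta (a : int * int) : Prop := a.2 = 0.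
Definition pi_xi (a : int * int) : int * int := (0, a.2).
Definition pi_eta (a : int * int) : int * int := (a.1, 0).

Definition add_rel (p q : int) (ws : 'I_3 -> seq (Sigma q)) : Prop :=
  [/\ Dom p q (ws i3_0), Dom p q (ws i3_1), Dom p q (ws i3_2) &
      addZ2 (psi p q (ws i3_0)) (psi p q (ws i3_1)) = psi p q (ws i3_2)].

Arguments add_rel p q ws : clear implicits.

Definition proj_rel (p q : int) (pi : int * int -> int * int)
  (ws : 'I_2 -> seq (Sigma q)) : Prop :=
  [/\ Dom p q (ws i2_0), Dom p q (ws i2_1) &
      psi p q (ws i2_1) = pi (psi p q (ws i2_0))].
Arguments proj_rel p q pi ws : clear implicits.

(* With Z[x]/<t> identified with Z^2, psi is Horner evaluation of a string,
   least significant letter first, where multiplication by x is a linear map of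
   Z^2.  Because |q| > 1 + |p|, whether a string of digits of absolute value at
   most 3|q| evaluates to 0 can be decided letter by letter while keeping a
   carry in a bounded box.  Running this on differences and sums of letters of
   synchronously read strings recognizes equality of values; Dom is then the
   complement of the projection of the regular relation "u has the value of w,
   the same length, and is lexicographically smaller or ends with a padding
   zero", and the addition relation is checked on column sums.
   When gcd(p, q) = 1 the x-coordinate of x^m (m > 0) is coprime to q, hence
   nonzero, so multiplication by x^m moves every nonzero element of <xi> out of
   <xi> and every nonzero element of <eta> out of <eta>.  Pumping a long minimal
   representative w = x y z of an element of such a subgroup inside the
   language would then force x z to represent the same element, contradicting
   minimality.  On the diagonal w (x) w the projection relations define exactly
   these languages. *)

From HB Require Import structures.
From mathcomp Require Import all_boot all_order all_algebra.
From mathcomp Require Import zify ring.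
From Stdlib Require Import Classical.
Set Implicit Arguments. Unset Strict Implicit. Unset Printing Implicit Defensive.
Import Order.TTheory GRing.Theory Num.Theory.
Local Open Scope ring_scope.

Lemma foldl_pair (S1 S2 A : Type) (f : S1 -> A -> S1) (g : S2 -> A -> S2) s w :
  foldl (fun s a => (f s.1 a, g s.2 a)) s w = (foldl f s.1 w, foldl g s.2 w).
Proof. by elim: w s => [|a w IH] [s1 s2] //=; rewrite IH. Qed.

Lemma foldl_ffun (I : finType) (S T : Type) (g : S -> T -> S) (F : {ffun I -> S})
    (x : seq {ffun I -> T}) :
  foldl (fun (F : {ffun I -> S}) (c : {ffun I -> T}) => [ffun i => g (F i) (c i)]) F x =
  [ffun i => foldl g (F i) (map (fun c : {ffun I -> T} => c i) x)].
Proof.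
elim: x F => [|c x IH] F /=; first by apply/ffunP => i; rewrite ffunE.
by rewrite IH; apply/ffunP => i; rewrite !ffunE.
Qed.

Section Combinators.
Variable A : finType.

Definition dfa_compl (D : dfa A) : dfa A :=
  @DFA A (dstate D) (dstart D) (@dstep A D) (predC (@dfinal A D)).

Lemma accepts_compl D w : accepts (dfa_compl D) w = ~~ accepts D w.
Proof. by []. Qed.

Definition dfa_op (op : bool -> bool -> bool) (D1 D2 : dfa A) : dfa A :=
  @DFA A (dstate D1 * dstate D2)%type (dstart D1, dstart D2)
    (fun s a => (dstep s.1 a, dstep s.2 a)) (fun s => op (dfinal s.1) (dfinal s.2)).

Lemma accepts_op op D1 D2 w :
  accepts (dfa_op op D1 D2) w = op (accepts D1 w) (accepts D2 w).
Proof. by rewrite /accepts /= foldl_pair. Qed.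

Definition dfa_pmap (B : finType) (h : A -> option B) (D : dfa B) : dfa A :=
  @DFA A (dstate D) (dstart D)
    (fun s a => if h a is Some b then dstep s b else s) (@dfinal B D).

Lemma accepts_pmap (B : finType) (h : A -> option B) D w :
  accepts (dfa_pmap h D) w = accepts D (pmap h w).
Proof.
rewrite /accepts /=; elim: w (dstart D) => //= a w IH s.
by case: (h a) => [b|] /=; rewrite IH.
Qed.

Lemma accepts_map (B : finType) (h : A -> B) D w :
  accepts (dfa_pmap (fun a => Some (h a)) D) w = accepts D (map h w).
Proof. by rewrite accepts_pmap; elim: w => //= a w ->. Qed.

End Combinators.

Section Projection.
Variables (A B : finType) (D : dfa (B * A)%type).

Definition proj_step (X : {set dstate D}) (a : A) : {set dstate D} :=
  [set s' | [exists s in X, exists b : B, s' == dstep s (b, a)]].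

Definition dfa_proj : dfa A :=
  @DFA A {set dstate D} [set dstart D] proj_step (fun X => [exists s in X, dfinal s]).

Lemma proj_stepP w s :
  reflect (exists2 u : seq B, size u = size w & s = foldl (@dstep _ D) (dstart D) (zip u w))
          (s \in foldl proj_step [set dstart D] w).
Proof.
apply: (iffP idP).
  elim/last_ind: w s => [|w a IH] s /=; first by rewrite in_set1 => /eqP ->; exists [::].
  rewrite -cats1 foldl_cat /= inE => /existsP [s0 /andP [/IH [u hu ->] /existsP [b /eqP ->]]].
  exists (rcons u b); first by rewrite size_rcons hu size_cat addn1.
  by rewrite -cats1 zip_cat // foldl_cat.
elim/last_ind: w s => [|w a IH] s [u]; first by case: u => // _ ->; rewrite in_set1.
case/lastP: u => [|u b]; first by rewrite size_rcons.
rewrite !size_rcons => -[hu] ->.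
rewrite -!cats1 zip_cat // !foldl_cat /= inE.
apply/existsP; exists (foldl (@dstep _ D) (dstart D) (zip u w)).
by rewrite IH; last exists u; rewrite //=; apply/existsP; exists b.
Qed.

Lemma accepts_proj w :
  accepts dfa_proj w <-> exists2 u : seq B, size u = size w & accepts D (zip u w).
Proof.
rewrite /accepts /=; split.
  by move=> /existsP [s /andP [/proj_stepP [u hu ->] hs]]; exists u.
move=> [u hu hacc]; apply/existsP; exists (foldl (@dstep _ D) (dstart D) (zip u w)).
by rewrite hacc andbT; apply/proj_stepP; exists u.
Qed.

End Projection.

Lemma pumping (A : finType) (D : dfa A) (w : seq A) :
  (#|dstate D| <= size w)%N ->
  exists x y z, [/\ w = x ++ y ++ z, (0 < size y)%N &
    forall i, accepts D (x ++ flatten (nseq i y) ++ z) = accepts D w].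
Proof.
move=> hw.
pose f (k : 'I_(#|dstate D|).+1) := foldl (@dstep A D) (@dstart A D) (take k w).
have /injectivePn [i [j ij fij]] : ~~ injectiveb f.
  by apply/injectiveP => /leq_card; rewrite card_ord; lia.
wlog lt_ij : i j ij fij / (i < j)%N.
  move=> W; case: (ltngtP i j) => h; first exact: (W i j ij fij h).
    by apply: (W j i _ (esym fij)); rewrite // eq_sym.
  by case/eqP: ij; apply/val_inj.
have hj : (j <= size w)%N by move: (ltn_ord j); lia.
set y := take (j - i) (drop i w).
have wE : w = take i w ++ y ++ drop j w.
  by rewrite -{1}(cat_take_drop i w) -(cat_take_drop (j - i) (drop i w)) drop_drop subnK // ltnW.
have loop : foldl (@dstep A D) (f i) y = f i.
  by rewrite {2}fij /f -foldl_cat /y -takeD subnKC // ltnW.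
exists (take i w), y, (drop j w); split => //.
  by rewrite size_take size_drop; case: ifP; lia.
move=> k; rewrite [in RHS]wE /accepts !foldl_cat -/(f i) loop.
by congr dfinal; elim: k => //= k IH; rewrite foldl_cat loop.
Qed.

Section Convolution.
Variables (A : finType) (m : nat).
Local Notation col := {ffun 'I_m -> option A}.
Implicit Types (ws : 'I_m -> seq A) (x : seq col).

Definition track (i : 'I_m) x : seq (option A) := map (fun c : col => c i) x.

Definition component (i : 'I_m) x : seq A := pmap (fun c : col => c i) x.

Lemma componentE i x : component i x = pmap id (track i x).
Proof. by elim: x => //= c x; rewrite /component /= => ->; case: (c i). Qed.

Fixpoint is_padded (l : seq (option A)) : bool :=
  if l is o :: l' then (if o is Some _ then is_padded l' else all (pred1 None) l')
  else true.

Definition blank (c : col) : bool := [forall i, c i == None].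

Definition is_conv x : bool := [forall i, is_padded (track i x)] && ~~ has blank x.

Lemma size_conv ws : size (conv ws) = (\max_(i < m) size (ws i))%N.
Proof. exact: size_mkseq. Qed.

Lemma nth_conv ws k i : (k < size (conv ws))%N ->
  nth [ffun=> None] (conv ws) k i = onth (ws i) k.
Proof. by move=> hk; rewrite nth_mkseq -?size_conv // ffunE. Qed.

Lemma pmap_padded (s : seq A) k : pmap id (map Some s ++ nseq k None) = s.
Proof. by rewrite pmap_cat; elim: s => [|a s /= ->]; [elim: k|]. Qed.

Lemma is_padded_padded (s : seq A) k : is_padded (map Some s ++ nseq k None).
Proof. by elim: s => [|a s IH] //=; case: k => //= k; apply/all_pred1_nseq. Qed.

Lemma is_paddedE l : is_padded l ->
  l = map Some (pmap id l) ++ nseq (size l - size (pmap id l)) None.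
Proof.
elim: l => [|[a|] l IH] //=; first by move/IH => {1}->; rewrite subSS.
move=> /all_pred1P -> /=; rewrite size_nseq.
by have -> : pmap id (nseq (size l) (@None A)) = [::] by elim: (size l).
Qed.

Lemma track_conv ws i :
  track i (conv ws) = map Some (ws i) ++ nseq (size (conv ws) - size (ws i)) None.
Proof.
have le_size : (size (ws i) <= size (conv ws))%N by rewrite size_conv (leq_bigmax i).
apply: (@eq_from_nth _ None).
  by rewrite /track size_map size_cat size_map size_nseq subnKC.
move=> k; rewrite /track size_map => hk; rewrite (nth_map [ffun=> None]) // nth_conv //.
rewrite nth_cat size_map onthE; case: ltnP => // h.
by rewrite nth_nseq nth_default ?size_map //; case: ifP.
Qed.

Lemma component_conv ws i : component i (conv ws) = ws i.
Proof. by rewrite componentE track_conv pmap_padded. Qed.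

Lemma is_conv_conv ws : is_conv (conv ws).
Proof.
apply/andP; split; first by apply/forallP => i; rewrite track_conv is_padded_padded.
apply/hasPn => c /(nthP [ffun=> None]) [k hk <-]; apply/negP => /forallP blank_k.
suff : (size (conv ws) <= k)%N by rewrite leqNgt hk.
rewrite {1}size_conv; apply/bigmax_leqP => i _.
by rewrite -onthNE -nth_conv // (eqP (blank_k i)).
Qed.

(* The last column of x is not blank, so the length of x is the maximal length
   of its components. *)
Lemma conv_components x ws : is_conv x -> (forall i, component i x = ws i) ->
  x = conv ws.
Proof.
move=> /andP [/forallP padded nonblank] componentsE.
have trackE i : track i x = map Some (ws i) ++ nseq (size x - size (ws i)) None.
  by rewrite {1}(is_paddedE (padded i)) -componentE componentsE /track size_map.
have le_size i : (size (ws i) <= size x)%N.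
  by rewrite -(size_map (fun c : col => c i)) -/(track i x) trackE size_cat size_map leq_addr.
have nthE k i : (k < size x)%N -> nth [ffun=> None] x k i = onth (ws i) k.
  move=> hk; rewrite -(nth_map _ None (fun c : col => c i) hk) -/(track i x) trackE.
  rewrite nth_cat size_map onthE.
  by case: ltnP => // h; rewrite nth_nseq nth_default ?size_map //; case: ifP.
have size_x : size x = size (conv ws).
  rewrite size_conv; apply/eqP; rewrite eqn_leq; apply/andP; split; last first.
    by apply/bigmax_leqP => i _.
  case/lastP E : x nonblank => [|x' c] // nonblank.
  have : ~~ blank c by apply: (hasPn nonblank); rewrite mem_rcons mem_head.
  rewrite negb_forall => /existsP [i /negP ci]; apply: (leq_trans _ (leq_bigmax i)).
  rewrite size_rcons -onthTE -nthE; last by rewrite E size_rcons.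
  by rewrite E nth_rcons ltnn eqxx; case: (c i) ci.
apply: (@eq_from_nth _ [ffun=> None] _ _ size_x) => k hk.
by apply/ffunP => i; rewrite nthE // nth_conv // -size_x.
Qed.

(* [Some false]: no padding read yet, [Some true]: inside the padding,
   [None]: a letter after the padding. *)
Definition pad_step (t : option bool) (o : option A) : option bool :=
  match t, o with
  | Some false, Some _ => Some false
  | Some _, None => Some true
  | _, _ => None
  end.

Lemma pad_stepE l : (foldl pad_step (Some false) l != None) = is_padded l.
Proof.
have dead l' : foldl pad_step None l' = None by elim: l'.
have tail l' : (foldl pad_step (Some true) l' != None) = all (pred1 None) l'.
  by elim: l' => [|[a|] l' IH] //=; rewrite dead.
by elim: l => [|[a|] l IH] //=; rewrite tail.
Qed.

Definition conv_dfa : dfa col :=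
  @DFA col ({ffun 'I_m -> option bool} * bool)%type ([ffun=> Some false], false)
    (fun s c => ([ffun i => pad_step (s.1 i) (c i)], s.2 || blank c))
    (fun s => [forall i, s.1 i != None] && ~~ s.2).

Lemma accepts_conv_dfa x : accepts conv_dfa x = is_conv x.
Proof.
rewrite /accepts /= (foldl_pair (fun (F : {ffun 'I_m -> option bool}) (c : col) =>
  [ffun i => pad_step (F i) (c i)]) (fun b c => b || blank c)) foldl_ffun /=.
have -> : foldl (fun b c => b || blank c) false x = has blank x.
  rewrite -[has _ _]/(false || _); elim: x false => [|c x IH] b /=; first by rewrite orbF.
  by rewrite IH orbA.
congr andb; apply: eq_forallb => i.
by rewrite ffunE ffunE pad_stepE.
Qed.

End Convolution.

Lemma pairD (a b : int * int) : a + b = (a.1 + b.1, a.2 + b.2). Proof. by []. Qed.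
Lemma pairN (a : int * int) : - a = (- a.1, - a.2). Proof. by []. Qed.
Lemma addZ2E (a b : int * int) : addZ2 a b = a + b. Proof. by []. Qed.

(* Multiplication by x on Z[x]/<t> in the coordinates (h1, h2) of h1 x + h2,
   using x^2 = q - p x. *)
Definition mulX (p q : int) (e : int * int) : int * int := (e.2 - p * e.1, q * e.1).

Fact mulX_is_zmod_morphism p q : zmod_morphism (mulX p q).
Proof. by move=> [a1 a2] [b1 b2]; rewrite /mulX !pairD !pairN /=; congr pair; ring. Qed.

HB.instance Definition _ p q :=
  GRing.isZmodMorphism.Build _ _ (mulX p q) (mulX_is_zmod_morphism p q).

Definition mulXn (p q : int) (n : nat) : int * int -> int * int := iter n (mulX p q).

Fact mulXn_is_zmod_morphism p q n : zmod_morphism (mulXn p q n).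
Proof.
elim: n => [|n IH] a b //.
by rewrite /mulXn /= -raddfB -[iter _ _ _]/(mulXn p q n _) IH.
Qed.

HB.instance Definition _ p q n :=
  GRing.isZmodMorphism.Build _ _ (mulXn p q n) (mulXn_is_zmod_morphism p q n).

Arguments mulXn : simpl never.

Lemma mulXnS p q n e : mulXn p q n.+1 e = mulX p q (mulXn p q n e).
Proof. by []. Qed.

Lemma mulXn_mulX p q n e : mulXn p q n (mulX p q e) = mulX p q (mulXn p q n e).
Proof. by rewrite /mulXn -iterSr. Qed.

Lemma mulXnC p q m n e : mulXn p q m (mulXn p q n e) = mulXn p q n (mulXn p q m e).
Proof. by rewrite /mulXn -!iterD addnC. Qed.

Fixpoint eval_digits (p q : int) (ds : seq int) : int * int :=
  if ds is d :: ds' then mulX p q (eval_digits p q ds') + (0, d) else 0.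

Section Coordinates.
Variables p q : int.
Local Notation t := (tpoly p q).
Local Notation mulX := (mulX p q).
Local Notation mulXn := (mulXn p q).
Local Notation eval_digits := (eval_digits p q).

Lemma size_tpoly : size t = 3%N.
Proof.
rewrite /tpoly -addrA size_polyDl size_polyXn //.
rewrite (leq_ltn_trans (size_polyD _ _)) // gtn_max size_polyN size_polyC.
by rewrite (leq_ltn_trans (size_polyMleq _ _)) ?size_polyX ?size_polyC;
  case: (p != 0); case: (q != 0).
Qed.

Lemma tpoly_monic : t \is monic.
Proof.
rewrite monicE /lead_coef size_tpoly /tpoly /=.
by rewrite coefB coefD coefMX coefC /= coefX coefMX coefC /= subr0 addr0.
Qed.

Definition coords (f : {poly int}) : int * int :=
  let r := Pdiv.Ring.rmodp f t in (r`_1, r`_0).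

Lemma coords_lin_add h a b : coords (h * t + (a%:P * 'X + b%:P)) = (a, b).
Proof.
have small : (size (a%:P * 'X + b%:P)%R < size t)%N.
  rewrite size_tpoly (leq_ltn_trans (size_polyD _ _)) // gtn_max size_polyC.
  by rewrite (leq_ltn_trans (size_polyMleq _ _)) ?size_polyX ?size_polyC /=;
    case: (a != 0); case: (b != 0).
rewrite /coords Pdiv.RingMonic.rmodp_addl_mul_small ?tpoly_monic //.
by rewrite !coefD !coefMX !coefC /= add0r addr0.
Qed.

Lemma coords_divE f : f = Pdiv.Ring.rdivp f t * t + ((coords f).1%:P * 'X + (coords f).2%:P).
Proof.
rewrite {1}(Pdiv.RingMonic.rdivp_eq tpoly_monic f); congr (_ + _).
have small : (size (Pdiv.Ring.rmodp f t) <= 2)%N.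
  by have := Pdiv.Ring.ltn_rmodpN0 f (monic_neq0 tpoly_monic); rewrite size_tpoly.
apply/polyP => -[|[|i]]; rewrite coefD coefMX !coefC //= ?mul0r ?add0r ?addr0 //.
by rewrite nth_default ?(leq_trans small).
Qed.

Lemma coordsD f g : coords (f + g) = coords f + coords g.
Proof. by rewrite /coords Pdiv.RingMonic.rmodpD ?tpoly_monic // !coefD. Qed.

Lemma coordsC d : coords d%:P = (0, d).
Proof. by rewrite -(coords_lin_add 0 0 d) polyC0 !mul0r !add0r. Qed.

Lemma coords_mulX f : coords (f * 'X) = mulX (coords f).
Proof.
set a := (coords f).1; set b := (coords f).2.
have fX : f * 'X = (Pdiv.Ring.rdivp f t * 'X + a%:P) * t +
                   ((b - p * a)%:P * 'X + (q * a)%:P).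
  by rewrite {1}(coords_divE f) -/a -/b /tpoly !polyCB !polyCM; ring.
by rewrite fX coords_lin_add.
Qed.

Lemma sim_coords f g : sim p q f g <-> coords f = coords g.
Proof.
split => [[h fg]|fg].
  have -> : f = h * t + g by rewrite -fg; ring.
  by rewrite coordsD /coords Pdiv.RingMonic.rmodp_mull ?tpoly_monic // !coef0 add0r.
exists (Pdiv.Ring.rdivp f t - Pdiv.Ring.rdivp g t).
by rewrite {1}(coords_divE f) {1}(coords_divE g) fg; ring.
Qed.

Lemma psi_eval_digits w : psi p q w = eval_digits (map (@letv q) w).
Proof.
rewrite /psi -/(coords _) /poly_of; elim: w => [|a w IH] /=.
  by rewrite [RHS](_ : _ = (0, 0)) // -(coordsC 0) polyC0.
by rewrite cons_poly_def coordsD coords_mulX coordsC IH.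
Qed.

Lemma sim_psi u w : sim p q (poly_of u) (poly_of w) <-> psi p q u = psi p q w.
Proof. exact: sim_coords. Qed.

Lemma eval_digits_cat s s' : eval_digits (s ++ s') = eval_digits s + mulXn (size s) (eval_digits s').
Proof. by elim: s => [|d s IH] /=; rewrite ?add0r // IH raddfD addrAC. Qed.

Lemma eval_digits_pad s k : eval_digits (s ++ nseq k 0) = eval_digits s.
Proof.
rewrite eval_digits_cat.
have -> : eval_digits (nseq k 0) = 0 by elim: k => //= k ->; rewrite raddf0 addr0.
by rewrite raddf0 addr0.
Qed.

Lemma eval_digits_catB x s s' :
  eval_digits (x ++ s) - eval_digits (x ++ s') = mulXn (size x) (eval_digits s - eval_digits s').
Proof. by rewrite !eval_digits_cat raddfB opprD addrACA subrr add0r. Qed.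

Lemma eval_digits_mapD (T : Type) (f g : T -> int) l :
  eval_digits [seq f x + g x | x <- l] = eval_digits (map f l) + eval_digits (map g l).
Proof.
elim: l => [|x l IH] /=; first by rewrite addr0.
by rewrite IH raddfD [RHS]addrACA; congr (_ + _); rewrite pairD /= add0r.
Qed.

Lemma eval_digits_mapN (T : Type) (f : T -> int) l :
  eval_digits [seq - f x | x <- l] = - eval_digits (map f l).
Proof.
elim: l => [|x l IH] /=; first by rewrite oppr0.
by rewrite IH raddfN opprD.
Qed.

End Coordinates.

Definition int_range (K : nat) : seq int := [seq i%:Z - K%:Z | i <- iota 0 (K + K).+1].

Lemma mem_int_range x K : (x \in int_range K) = (`|x| <= K)%N.
Proof.
apply/mapP/idP => [[i]|hx]; first by rewrite mem_iota add0n => /andP[_ hi] ->; lia.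
by exists (absz (x + K%:Z)); [rewrite mem_iota add0n; apply/andP; split => //; lia | lia].
Qed.

Section CarryAutomaton.
Variables (p q : int).
Hypothesis hpq : 1 + `|p| < `|q|.
Local Notation mulX := (mulX p q).
Local Notation mulXn := (mulXn p q).
Local Notation eval_digits := (eval_digits p q).

Lemma q_neq0 : q != 0.
Proof. by apply/eqP => q0; move: hpq; rewrite q0 normr0; lia. Qed.

(* A string with least significant digit d has value E iff the rest has value
   E' with E = x E' + d, which determines E' (if it exists). *)
Definition carry_step (E : int * int) (d : int) : option (int * int) :=
  if (q %| E.2 - d)%Z then Some (((E.2 - d) %/ q)%Z, E.1 + p * ((E.2 - d) %/ q)%Z)
  else None.

Lemma carry_stepP E d E' : carry_step E d = Some E' <-> E = mulX E' + (0, d).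
Proof.
rewrite /carry_step; split.
  case: ifP => // /divzK qdvd [<-]; rewrite /mulX pairD /=.
  by case: E qdvd => a b /= qdvd; congr pair; rewrite -?[q * _]mulrC ?qdvd; ring.
case: E' => a b ->; rewrite /mulX pairD /=.
have -> : q * a + d - d = a * q by ring.
by rewrite dvdz_mull ?dvdzz // mulzK ?q_neq0 // addr0 subrK.
Qed.

Definition carry_trans (o : option (int * int)) (d : int) := obind (carry_step^~ d) o.

Lemma carry_transP E F ds :
  foldl carry_trans (Some E) ds = Some F <-> E = eval_digits ds + mulXn (size ds) F.
Proof.
have dead ds' : foldl carry_trans None ds' = None by elim: ds'.
elim: ds E => [|d ds IH] E /=; first by rewrite add0r; split => [[]|->].
rewrite mulXnS addrAC -raddfD -carry_stepP.
change (carry_trans (Some E) d) with (carry_step E d).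
by case: (carry_step E d) => [E'|]; rewrite ?dead ?IH //; split => [->|[]].
Qed.

Definition carry_bound : nat := (3 * `|q|)%N.

Definition carry_states : seq (int * int) :=
  [seq (a, b) | a <- int_range carry_bound, b <- int_range ((1 + `|p|) * carry_bound)].

Lemma mem_carry_states E : (E \in carry_states) =
  (`|E.1| <= carry_bound)%N && (`|E.2| <= (1 + `|p|) * carry_bound)%N.
Proof.
case: E => a b; apply/allpairsP/andP => [[[x y] /= [hx hy [-> ->]]]|[ha hb]].
  by rewrite -!mem_int_range.
by exists (a, b); rewrite /= !mem_int_range.
Qed.

(* Digits of absolute value at most 3|q| (differences and sums of three letters)
   keep the carries in a finite box. *)
Lemma carry_step_states E d E' : E \in carry_states -> (`|d| <= carry_bound)%N ->
  carry_step E d = Some E' -> E' \in carry_states.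
Proof.
rewrite !mem_carry_states /carry_bound => /andP [ha hb] hd /carry_stepP.
case: E E' ha hb => a b [a' b']; rewrite /mulX pairD /= => ha hb [ea eb].
have Hq := hpq; nia.
Qed.

Definition carry_state : finType := seq_sub carry_states.

Definition carry_dfa (A : finType) (dig : A -> int) : dfa A :=
  @DFA A (option carry_state) (insub 0)
    (fun o a => if o is Some e then obind insub (carry_step (val e) (dig a)) else None)
    (fun o => omap val o == Some 0).

Lemma accepts_carry_dfa (A : finType) (dig : A -> int) w :
  (forall a, `|dig a| <= carry_bound)%N ->
  accepts (carry_dfa dig) w = (eval_digits (map dig w) == 0).
Proof.
move=> dig_bound.
have run o : omap val (foldl (@dstep _ (carry_dfa dig)) o w) =
             foldl carry_trans (omap val o) (map dig w).
  elim: w o => [|a w IH] [e|] //=.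
  case hE: (carry_step (val e) (dig a)) => [E|] /=; last exact: IH None.
  have inE : E \in carry_states by apply: carry_step_states hE; [exact: valP|].
  by case: insubP => [u _ uE|]; rewrite ?inE // IH /= uE.
have zero_in : (0 : int * int) \in carry_states by rewrite mem_carry_states.
move: (run (insub 0)); rewrite /accepts /= => ->.
case: insubP => [u _ u0|]; last by rewrite zero_in.
rewrite -[omap _ (Some u)]/(Some (val u)) u0.
apply/eqP/eqP => [/carry_transP|e0]; first by rewrite raddf0 addr0 => <-.
by apply/carry_transP; rewrite raddf0 addr0.
Qed.

End CarryAutomaton.

Section LexAutomaton.
Variable n : nat.

Definition lex_step (c : option bool) (ba : 'I_n * 'I_n) : option bool :=
  if c is None then
    (if (ba.1 < ba.2)%N then Some true else if (ba.2 < ba.1)%N then Some false else None)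
  else c.

Definition lex_dfa : dfa ('I_n * 'I_n)%type :=
  @DFA _ (option bool) None lex_step (pred1 (Some true)).

Lemma accepts_lex_dfa u w : size u = size w -> accepts lex_dfa (zip u w) = lex_lt u w.
Proof.
have decided b l : foldl lex_step (Some b) l = Some b by elim: l.
rewrite /accepts /=; elim: u w => [|b u IH] [|a w] //= [/IH {}IH].
rewrite {1}/lex_step /=; case: ltnP => [|ab]; first by rewrite decided.
case: ltnP => [ba|ba]; first by rewrite decided /=; apply/esym/negbTE/nandP; left;
  apply/eqP => eab; move: ba; rewrite eab ltnn.
by rewrite (_ : b = a) ?eqxx //; apply/val_inj/eqP; rewrite eqn_leq ab ba.
Qed.

End LexAutomaton.

Definition last_dfa (A : finType) (P : pred A) : dfa A :=
  @DFA A bool false (fun _ a => P a) id.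

Lemma accepts_last_dfa (A : finType) (P : pred A) w :
  accepts (last_dfa P) w = last false (map P w).
Proof. by rewrite /accepts /=; elim: w false => //= a w IH b; rewrite IH. Qed.

Lemma letv_bound (q : int) (a : Sigma q) : (`|letv a| < `|q|)%N.
Proof. by have := ltn_ord a; rewrite /letv; lia. Qed.

Section DomRegular.
Variables (p q : int).
Hypothesis hpq : 1 + `|p| < `|q|.
Local Notation Sg := (Sigma q).

Definition zero_letter : Sg := @Ordinal (2 * `|q| - 1) (`|q| - 1) (ltac:(move: hpq; lia)).

Lemma letv_zero_letter : letv zero_letter = 0.
Proof. by rewrite /letv /=; move: hpq; lia. Qed.

Definition ends_with_zero (u : seq Sg) : bool := last false (map (fun a => letv a == 0) u).

Lemma not_DomP w : ~ Dom p q w <-> exists2 u, llex_lt u w & psi p q u = psi p q w.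
Proof.
split => [nD|[u uw /sim_psi uw_sim] D]; last exact: D u uw uw_sim.
apply: NNPP => no_u; apply: nD => u uw /sim_psi uw_sim; apply: no_u; by exists u.
Qed.

(* Shorter competitors are padded with zeros to the length of w; a padded
   competitor that is not lexicographically smaller then ends with a zero. *)
Lemma not_Dom_same_size w : ~ Dom p q w <->
  exists2 u, size u = size w & psi p q u = psi p q w /\ lex_lt u w || ends_with_zero u.
Proof.
rewrite not_DomP; split => -[u]; last first.
  move=> hs [uw /orP [lt_uw|]]; first by exists u; rewrite // /llex_lt hs eqxx lt_uw orbT.
  case/lastP: u hs uw => [|u a] // hs uw.
  rewrite /ends_with_zero map_rcons last_rcons => /eqP a0; exists u.
    by rewrite /llex_lt -hs size_rcons ltnSn.
  by rewrite -uw !psi_eval_digits map_rcons -cats1 a0 (eval_digits_pad _ _ _ 1).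
rewrite /llex_lt => /orP [lt_uw|/andP [/eqP hs lt_uw]] uw; last by exists u; rewrite ?lt_uw.
exists (u ++ nseq (size w - size u) zero_letter).
  by rewrite size_cat size_nseq subnKC // ltnW.
split; first by rewrite -uw !psi_eval_digits map_cat map_nseq letv_zero_letter eval_digits_pad.
apply/orP; right; rewrite /ends_with_zero map_cat map_nseq letv_zero_letter last_cat.
have : (0 < size w - size u)%N by rewrite subn_gt0.
by case: (size w - size u)%N => // k _ /=; elim: k.
Qed.

Definition competitor_dfa : dfa (Sg * Sg)%type :=
  dfa_op andb (carry_dfa p q (fun ba : Sg * Sg => letv ba.1 - letv ba.2))
    (dfa_op orb (lex_dfa _) (last_dfa (fun ba : Sg * Sg => letv ba.1 == 0))).

Lemma accepts_competitor_dfa u w : size u = size w ->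
  accepts competitor_dfa (zip u w) = (psi p q u == psi p q w) && (lex_lt u w || ends_with_zero u).
Proof.
move=> hs; rewrite !accepts_op accepts_lex_dfa // accepts_last_dfa accepts_carry_dfa //; last first.
  by move=> [b a] /=; have := letv_bound b; have := letv_bound a; rewrite /carry_bound; lia.
have fstE (T : Type) (f : Sg -> T) : map (fun ba : Sg * Sg => f ba.1) (zip u w) = map f u.
  by rewrite (map_comp f fst) -/(unzip1 _) unzip1_zip ?hs.
have sndE (f : Sg -> int) : map (fun ba : Sg * Sg => f ba.2) (zip u w) = map f w.
  by rewrite (map_comp f snd) -/(unzip2 _) unzip2_zip ?hs.
rewrite (eval_digits_mapD _ _ (fun ba : Sg * Sg => letv ba.1) (fun ba => - letv ba.2)).
rewrite eval_digits_mapN fstE sndE !psi_eval_digits subr_eq0; congr (_ && (_ || _)).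
by rewrite /ends_with_zero -(fstE _ (fun a => letv a == 0)).
Qed.

Definition Dom_dfa : dfa Sg := dfa_compl (dfa_proj competitor_dfa).

Lemma accepts_Dom_dfa w : accepts Dom_dfa w <-> Dom p q w.
Proof.
rewrite accepts_compl; split => [/negP no_comp|D].
  have [//|/not_Dom_same_size [u hs [uw lt_uw]]] := classic (Dom p q w); case: no_comp.
  by apply/accepts_proj; exists u; rewrite // accepts_competitor_dfa // uw eqxx.
apply/negP => /accepts_proj [u hs]; rewrite accepts_competitor_dfa // => /andP [/eqP uw lt_uw].
by move: D; apply/not_Dom_same_size; exists u.
Qed.

End DomRegular.

Section AdditionAutomaton.
Variables (p q : int).
Hypothesis hpq : 1 + `|p| < `|q|.
Local Notation Sg := (Sigma q).
Local Notation col := {ffun 'I_3 -> option Sg}.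

Definition padded_letv (o : option Sg) : int := if o is Some a then letv a else 0.

Definition sum_digit (c : col) : int :=
  padded_letv (c i3_0) + padded_letv (c i3_1) - padded_letv (c i3_2).

Definition component_Dom_dfa (i : 'I_3) : dfa col :=
  dfa_pmap (fun c : col => c i) (Dom_dfa p q).

Definition add_dfa : dfa col :=
  dfa_op andb (conv_dfa Sg 3) (dfa_op andb (carry_dfa p q sum_digit)
    (dfa_op andb (component_Dom_dfa i3_0)
      (dfa_op andb (component_Dom_dfa i3_1) (component_Dom_dfa i3_2)))).

Lemma eval_component_conv (ws : 'I_3 -> seq Sg) i :
  eval_digits p q (map (fun c : col => padded_letv (c i)) (conv ws)) = psi p q (ws i).
Proof.
rewrite (map_comp padded_letv (fun c : col => c i)) -/(track i _) track_conv.
by rewrite map_cat map_nseq -map_comp eval_digits_pad psi_eval_digits.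
Qed.

Lemma eval_sum_digit_conv (ws : 'I_3 -> seq Sg) :
  eval_digits p q (map sum_digit (conv ws)) =
  psi p q (ws i3_0) + psi p q (ws i3_1) - psi p q (ws i3_2).
Proof.
rewrite (eval_digits_mapD _ _ (fun c : col => padded_letv (c i3_0) + padded_letv (c i3_1))
                               (fun c : col => - padded_letv (c i3_2))).
by rewrite eval_digits_mapN eval_digits_mapD !eval_component_conv.
Qed.

Lemma accepts_add_dfa x : accepts add_dfa x <-> exists ws, add_rel p q ws /\ x = conv ws.
Proof.
have digit_bound c : (`|sum_digit c| <= carry_bound q)%N.
  have bound o : (`|padded_letv o| < `|q|)%N.
    by case: o => [a|] /=; [exact: letv_bound | move: hpq; lia].
  rewrite /sum_digit /carry_bound.
  by have := bound (c i3_0); have := bound (c i3_1); have := bound (c i3_2); lia.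
have Dom_component i x' : accepts (component_Dom_dfa i) x' <-> Dom p q (component i x').
  by rewrite accepts_pmap; exact: accepts_Dom_dfa.
rewrite !accepts_op accepts_conv_dfa accepts_carry_dfa //; split.
  case/and5P => conv_x /eqP sum0 /Dom_component D0 /Dom_component D1 /Dom_component D2.
  have x_conv := conv_components conv_x (fun i => erefl).
  exists (fun i => component i x); split => //; split => //.
  apply/eqP; rewrite addZ2E -subr_eq0.
  by rewrite -(eval_sum_digit_conv (fun i => component i x)) -x_conv sum0.
move=> [ws [[D0 D1 D2]]]; rewrite addZ2E => sum_ws ->.
apply/and5P; split; rewrite ?is_conv_conv ?eval_sum_digit_conv -?sum_ws ?subrr //;
  by apply/Dom_component; rewrite component_conv.
Qed.

End AdditionAutomaton.

Section Representatives.
Variables (p q : int).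
Hypothesis hpq : 1 + `|p| < `|q|.
Local Notation Sg := (Sigma q).

Lemma letv_surj (r : int) : (`|r| < `|q|)%N -> exists a : Sg, letv a = r.
Proof.
move=> hr; have ha : (absz (r + (`|q|%:Z - 1))%R < 2 * `|q| - 1)%N by lia.
by exists (Ordinal ha); rewrite /letv /=; lia.
Qed.

Lemma divz_trunc (B : int) : exists s r : int,
  [/\ B = r + q * s, (`|r| < `|q|)%N & (`|s| * `|q| <= `|B|)%N].
Proof.
have q0 := q_neq0 hpq.
suff nonneg C : 0 <= C -> exists s r : int,
    [/\ C = r + q * s, (`|r| < `|q|)%N & (`|s| * `|q| <= `|C|)%N].
  have [/nonneg //|B_neg] := lerP 0 B.
  have [s [r [Bsr hr hs]]] := nonneg (- B) (ltac:(lia)).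
  by exists (- s), (- r); split; lia.
move=> C_ge0; exists (C %/ q)%Z, (C %% q)%Z.
have := divz_eq C q; have := modz_ge0 C q0; have := ltz_mod C q0.
move: (C %/ q)%Z (C %% q)%Z => s r r_lt r_ge0 Csr.
have sq_ge0 : 0 <= s * q.
  have [//|sq_neg] := lerP 0 (s * q).
  have [s0|s_neq0] := eqVneq s 0; first by move: sq_neg; rewrite s0 mul0r ltxx.
  have : (0 < `|q|)%N by lia.
  nia.
by split; [lia | lia | nia].
Qed.

(* Writing B = r + q s gives (A, B) = x (s, A + p s) + r, and the measure
   3|A| + 2|B| drops because 3 + 2|p| < 2|q|. *)
Lemma eval_digits_surj_measure n (A B : int) : (3 * `|A| + 2 * `|B| <= n)%N ->
  exists ds : seq Sg, eval_digits p q (map (@letv q) ds) = (A, B).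
Proof.
elim: n A B => [|n IH] A B hn.
  have [-> ->] : A = 0 /\ B = 0 by lia.
  by exists [::].
have [/andP [/eqP -> /eqP ->]|AB_neq0] := boolP ((A == 0) && (B == 0)); first by exists [::].
have [s [r [Bsr hr hs]]] := divz_trunc B.
have measure_lt : (3 * `|s| + 2 * `|(A + p * s)%R| <= n)%N.
  move: AB_neq0; rewrite negb_and => AB_neq0; have Hq := hpq; nia.
have [a ar] := letv_surj hr.
have [ds hds] := IH s (A + p * s) measure_lt.
by exists (a :: ds); rewrite /= hds ar /mulX pairD /= Bsr; congr pair; ring.
Qed.

Lemma psi_surj (A B : int) : exists w : seq Sg, psi p q w = (A, B).
Proof.
have [ds hds] := eval_digits_surj_measure (leqnn (3 * `|A| + 2 * `|B|)).
by exists ds; rewrite psi_eval_digits.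
Qed.

Definition alph_size : nat := (2 * `|q| - 1)%N.

(* Most significant letter first, so that on strings of equal length the order
   of numerals is lex_lt. *)
Fixpoint numeral (u : seq Sg) : nat :=
  if u is a :: u' then (a * alph_size ^ size u' + numeral u')%N else 0%N.

(* Position of u in the length-lexicographic enumeration of Sigma_q^*. *)
Definition llex_rank (u : seq Sg) : nat := (\sum_(k < size u) alph_size ^ k + numeral u)%N.

Lemma numeral_lt u : (numeral u < alph_size ^ size u)%N.
Proof.
elim: u => [|a u IH] //=; rewrite expnS.
have : (a < alph_size)%N := ltn_ord a.
by move: (alph_size ^ size u)%N (numeral u) IH => P c; nia.
Qed.

Lemma lex_lt_numeral u w : size u = size w -> lex_lt u w -> (numeral u < numeral w)%N.
Proof.
elim: u w => [|b u IH] [|a w] //= [hs] /orP [ba|/andP [/eqP -> /(IH _ hs)]].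
  have := numeral_lt u; have := numeral_lt w; rewrite hs.
  by move: (alph_size ^ size w)%N (numeral u) (numeral w) => P c1 c2; nia.
by rewrite hs ltn_add2l.
Qed.

Lemma llex_lt_rank u w : llex_lt u w -> (llex_rank u < llex_rank w)%N.
Proof.
rewrite /llex_rank => /orP [lt_size|/andP [/eqP hs /(lex_lt_numeral hs)]]; last first.
  by rewrite hs ltn_add2l.
apply: (leq_trans (_ : _ < \sum_(k < (size u).+1) alph_size ^ k)%N).
  by rewrite big_ord_recr /= ltn_add2l numeral_lt.
rewrite (leq_trans _ (leq_addr _ _)) // (big_ord_widen (size w) _ lt_size) big_mkcond /=.
by apply: leq_sum => k _; case: ifP.
Qed.

Lemma exists_Dom_rep (u : seq Sg) : exists2 w, Dom p q w & psi p q w = psi p q u.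
Proof.
have [n] := ubnP (llex_rank u); elim: n u => // n IH u /ltnSE rank_u.
have [|/not_DomP [u' /llex_lt_rank lt_u' <-]] := classic (Dom p q u); first by exists u.
exact/IH/(leq_trans lt_u' rank_u).
Qed.

Lemma exists_Dom_psi (A B : int) : exists2 w, Dom p q w & psi p q w = (A, B).
Proof.
have [u <-] := psi_surj A B; exact: exists_Dom_rep.
Qed.

End Representatives.

Section NonRegular.
Variables (p q : int).
Hypothesis hpq : 1 + `|p| < `|q|.
Local Notation mulXn := (mulXn p q).
Local Notation eval_digits := (eval_digits p q).

Lemma mulXn_scale m c e : mulXn m (c * e.1, c * e.2) = (c * (mulXn m e).1, c * (mulXn m e).2).
Proof.
elim: m => // m IH; rewrite !mulXnS IH.
by case: (mulXn m e) => a b; rewrite /mulX /=; congr pair; ring.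
Qed.

(* The coordinates of x^m = (a_m) x + b_m satisfy a_(m+1) = b_m - p a_m and
   b_(m+1) = q a_m, so coprimality of p and q propagates. *)
Lemma coprime_mulXn_xi (coprime_pq : gcdz p q = 1%N) m : (0 < m)%N ->
  coprimez q (mulXn m (0, 1)).1 /\ (q %| (mulXn m (0, 1)).2)%Z.
Proof.
case: m => // m _; elim: m => [|m [IH1 IH2]].
  by rewrite /mulXn /= /mulX /= !mulr0 subr0; split; [rewrite coprimezE /= coprimen1|].
rewrite mulXnS; case: (mulXn m.+1 (0, 1)) IH1 IH2 => [a b] /= coprime_a /dvdzP [k ->].
rewrite /mulX /=; split; last exact/dvdz_mulr/dvdzz.
rewrite /coprimez -[k * q - p * a]/(k * q + - (p * a)) gcdzMDl gcdzN.
by rewrite -/(coprimez q (p * a)) coprimezMr coprime_a andbT /coprimez gcdzC coprime_pq.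
Qed.

Lemma mulXn_xi_neq0 (coprime_pq : gcdz p q = 1%N) m : (0 < m)%N -> (mulXn m (0, 1)).1 != 0.
Proof.
move=> m_gt0; have [+ _] := coprime_mulXn_xi coprime_pq m_gt0.
by apply: contraTneq => ->; rewrite /coprimez gcdz0; move: hpq; lia.
Qed.

Definition growth : nat := (1 + `|p| + `|q|)%N.

Lemma eval_digits_lt ds : all (fun d => `|d| < `|q|)%N ds ->
  (`|(eval_digits ds).1| < growth ^ size ds)%N /\ (`|(eval_digits ds).2| < growth ^ size ds)%N.
Proof.
elim: ds => [|d ds IH] //= /andP [hd /IH]; rewrite expnS /growth.
case: (eval_digits ds) => a b /=; move: (_ ^ size ds)%N => P [ha hb].
by split; nia.
Qed.

Lemma long_Dom_rep (A B : int) N : (growth ^ N <= `|A|)%N \/ (growth ^ N <= `|B|)%N ->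
  exists w, [/\ Dom p q w, psi p q w = (A, B) & (N <= size w)%N].
Proof.
move=> large; have [w Dw wAB] := exists_Dom_psi hpq A B.
exists w; split => //; apply: ltnW.
have [|lt1 lt2] := @eval_digits_lt (map (@letv q) w).
  by apply/allP => d /mapP [a _ ->]; exact: letv_bound.
rewrite -psi_eval_digits wAB size_map /= in lt1 lt2.
rewrite -(ltn_exp2l _ _ (_ : 1 < growth)%N); last by rewrite /growth; lia.
by case: large => /leq_ltn_trans; [apply | apply].
Qed.

Lemma eval_pumped (x y z : seq int) :
  eval_digits (x ++ y ++ y ++ z) - eval_digits (x ++ y ++ z) =
  mulXn (size y) (eval_digits (x ++ y ++ z) - eval_digits (x ++ z)).
Proof. by rewrite !eval_digits_catB mulXnC. Qed.

(* Pumping a long minimal representative x y z inside the language gives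
   values V0, V1, V2 of x z, x y z, x y y z with V2 - V1 = x^|y| (V1 - V0);
   if P forces V1 = V0 then x z is a shorter representative of the same element. *)
Lemma not_regular_Dom_pred (P : int * int -> Prop)
    (rigid : forall m V0 V1 V2, (0 < m)%N -> P V0 -> P V1 -> P V2 ->
       V2 - V1 = mulXn m (V1 - V0) -> V1 = V0)
    (unbounded : forall N, exists w, [/\ Dom p q w, P (psi p q w) & (N <= size w)%N]) :
  ~ regular (fun w => Dom p q w /\ P (psi p q w)).
Proof.
move=> [D accD]; have [w [Dw Pw long_w]] := unbounded #|dstate D|.
have [x [y [z [w_xyz y_gt0 pumpD]]]] := pumping long_w; subst w.
have pumped i : Dom p q (x ++ flatten (nseq i y) ++ z) /\
                P (psi p q (x ++ flatten (nseq i y) ++ z)).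
  by apply/accD; rewrite pumpD; apply/accD.
have [_ P0] := pumped 0%N; have [_ P2] := pumped 2%N.
rewrite /= ?cats0 in P0 P2.
have same : psi p q (x ++ y ++ z) = psi p q (x ++ z).
  apply: (rigid _ _ _ _ y_gt0 P0 Pw P2).
  by rewrite !psi_eval_digits !map_cat -?catA -(size_map (@letv q) y) eval_pumped.
apply: Dw (x ++ z) _ _; last exact/sim_psi.
by rewrite /llex_lt !size_cat ltn_add2l -[X in (X < _)%N]add0n ltn_add2r y_gt0.
Qed.

Lemma not_regular_xi (coprime_pq : gcdz p q = 1%N) :
  ~ regular (fun w => Dom p q w /\ in_xi (psi p q w)).
Proof.
apply: not_regular_Dom_pred => [m [a0 b0] [a1 b1] [a2 b2] m_gt0|N].
  rewrite /in_xi /= => -> -> ->.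
  rewrite -[(0, b2) - _]/(0 - 0, b2 - b1) -[(0, b1) - _]/(0 - 0, b1 - b0) subrr.
  rewrite (_ : (0, b1 - b0) = ((b1 - b0) * 0, (b1 - b0) * 1)); last first.
    by rewrite mulr0 mulr1.
  rewrite (mulXn_scale m (b1 - b0) (0, 1)) => -[/esym/eqP].
  by rewrite mulf_eq0 (negbTE (mulXn_xi_neq0 coprime_pq m_gt0)) orbF subr_eq0 => /eqP ->.
have [w [Dw wE long_w]] := long_Dom_rep (A := 0) (B := (growth ^ N)%:Z) (or_intror (leqnn _)).
by exists w; rewrite wE.
Qed.

Lemma not_regular_eta (coprime_pq : gcdz p q = 1%N) :
  ~ regular (fun w => Dom p q w /\ in_eta (psi p q w)).
Proof.
apply: not_regular_Dom_pred => [m [a0 b0] [a1 b1] [a2 b2] m_gt0|N].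
  rewrite /in_eta /= => -> -> ->.
  rewrite -[(a2, 0) - _]/(a2 - a1, 0 - 0) -[(a1, 0) - _]/(a1 - a0, 0 - 0) subrr.
  rewrite (_ : (a1 - a0, 0) = mulX p q ((a1 - a0) * 0, (a1 - a0) * 1)); last first.
    by rewrite /mulX /= !mulr0 subr0 mulr1.
  rewrite mulXn_mulX (mulXn_scale m (a1 - a0) (0, 1)) => -[_ /esym/eqP].
  rewrite !mulf_eq0 (negbTE (q_neq0 hpq)) (negbTE (mulXn_xi_neq0 coprime_pq m_gt0)) orbF.
  by rewrite subr_eq0 => /eqP ->.
have [w [Dw wE long_w]] := long_Dom_rep (A := (growth ^ N)%:Z) (B := 0) (or_introl (leqnn _)).
by exists w; rewrite wE.
Qed.

End NonRegular.

Section Projections.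
Variables (p q : int).
Local Notation Sg := (Sigma q).
Local Notation col := {ffun 'I_2 -> option Sg}.

Definition diag (a : Sg) : col := [ffun=> Some a].

Lemma component_diag w i : component i (map diag w) = w.
Proof. by elim: w => //= a w; rewrite /component /= ffunE => ->. Qed.

Lemma conv_diag w : conv (fun _ : 'I_2 => w) = map diag w.
Proof.
symmetry; apply: conv_components => [|i]; last exact: component_diag.
apply/andP; split.
  apply/forallP => i; have -> : track i (map diag w) = map Some w ++ nseq 0 None.
    by rewrite cats0 /track -map_comp; apply: eq_map => a /=; rewrite ffunE.
  exact: is_padded_padded.
by apply/hasPn => c /mapP [a _ ->]; rewrite negb_forall; apply/existsP; exists i2_0; rewrite ffunE.
Qed.

(* Reading the diagonal w (x) w decides whether (w, w) is in the graph of pi. *)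
Lemma regular_of_proj_rel (pi : int * int -> int * int) (P : int * int -> Prop) :
  (forall a, a = pi a <-> P a) -> FA_recognizable (proj_rel p q pi) ->
  regular (fun w => Dom p q w /\ P (psi p q w)).
Proof.
move=> fixedP [D accD]; exists (dfa_pmap (fun a => Some (diag a)) D) => w.
rewrite accepts_map accD; split => [[ws [[D0 _ pi_ws] diag_ws]]|[Dw /fixedP pi_w]].
  have ws_w i : ws i = w by rewrite -(component_conv ws i) -diag_ws component_diag.
  by rewrite !ws_w in D0 pi_ws; split => //; apply/fixedP.
by exists (fun _ => w); rewrite conv_diag.
Qed.

End Projections.

Lemma pi_xi_fixed (a : int * int) : a = pi_xi a <-> in_xi a.
Proof. by case: a => a1 a2; rewrite /in_xi /pi_xi; split => [[]|/= ->]. Qed.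

Lemma pi_eta_fixed (a : int * int) : a = pi_eta a <-> in_eta a.
Proof. by case: a => a1 a2; rewrite /in_eta /pi_eta; split => [[]|/= ->]. Qed.

Theorem theorem1 (p q : int) (hpq : 1 + `|p| < `|q|) :
  [/\ regular (Dom p q),
      FA_recognizable (add_rel p q) &
      gcdz p q = 1%N ->
      [/\ ~ regular (fun w => Dom p q w /\ in_xi (psi p q w)),
          ~ regular (fun w => Dom p q w /\ in_eta (psi p q w)),
          ~ FA_recognizable (proj_rel p q pi_xi) &
          ~ FA_recognizable (proj_rel p q pi_eta)]].
Proof.
split.
- by exists (Dom_dfa p q); exact: accepts_Dom_dfa.
- by exists (add_dfa p q); exact: accepts_add_dfa.
move=> coprime_pq; split.
- exact: not_regular_xi.
- exact: not_regular_eta.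
- by move/(regular_of_proj_rel pi_xi_fixed); exact: not_regular_xi.
- by move/(regular_of_proj_rel pi_eta_fixed); exact: not_regular_eta.
Qed.
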